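(* Let $G$ be a harmonic-even partial cube and $F_{ab}$ a $\Theta$-class of $G$. If $\alpha$ is an automorphism of $G$ such that $v^{\alpha}=v$ and $u^{\alpha}=u$ for every edge $vu\in F_{ab}$, then $\alpha$ is the identity.
   Context: A partial cube is a graph isometrically embeddable into a hypercube. On edges define $ab\,\Theta\,xy$ iff $d(a,x)+d(b,y)\neq d(a,y)+d(b,x)$ ($d$ the shortest-path distance); in a partial cube this is an equivalence relation, and $F_{uv}$ denotes the $\Theta$-class of edge $uv$. A graph is harmonic-even if every vertex $v$ has a unique vertex $\bar v$ at distance $\mathrm{diam}(G)$ and $\bar u\bar v$ is an edge whenever $uv$ is an edge. $v^{\alpha}$ denotes the image of $v$ under $\alpha$. *)

From mathcomp Require Import all_boot.
Set Implicit Arguments. Unset Strict Implicit. Unset Printing Implicit Defensive.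

Section Graphs.
Variable T : finType.

Definition simple_graph (e : rel T) : Prop := symmetric e /\ irreflexive e.

Fixpoint ball (e : rel T) (x : T) (n : nat) : {set T} :=
  if n is k.+1 then ball e x k :|: [set y | [exists z in ball e x k, e z y]]
  else [set x].

(* shortest-path distance: least n with y within n steps of x
   (meaningful for connected graphs, where it is < #|T|) *)
Definition dist (e : rel T) (x y : T) : nat :=
  find (fun n => y \in ball e x n) (iota 0 #|T|).

Definition connected (e : rel T) : Prop := forall x y : T, connect e x y.

Definition hamming (n : nat) (u v : {ffun 'I_n -> bool}) : nat :=
  #|[set i | u i != v i]|.

Definition partial_cube (e : rel T) : Prop :=
  simple_graph e /\ connected e /\
  exists n (f : T -> {ffun 'I_n -> bool}),
    forall x y, dist e x y = hamming (f x) (f y).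

Definition diam (e : rel T) : nat := \max_(x : T) \max_(y : T) dist e x y.

Definition harmonic_even (e : rel T) : Prop :=
  (forall v : T, exists! w : T, dist e v w = diam e) /\
  (forall u v ub vb : T, e u v -> dist e u ub = diam e ->
     dist e v vb = diam e -> e ub vb).

Definition Theta (e : rel T) (a b x y : T) : bool :=
  dist e a x + dist e b y != dist e a y + dist e b x.

Definition in_F (e : rel T) (a b x y : T) : bool := e x y && Theta e a b x y.

Definition automorphism (e : rel T) (alpha : T -> T) : Prop :=
  bijective alpha /\ forall x y, e (alpha x) (alpha y) = e x y.

End Graphs.

From mathcomp Require Import all_boot zify.
Set Implicit Arguments. Unset Strict Implicit. Unset Printing Implicit Defensive.

(* Embed G isometrically into Q_n by f, and let ab flip coordinate i.  The
   antipode map of a harmonic-even partial cube complements every coordinate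
   that is not constant on G.  Since alpha fixes a and b, it preserves the i-th
   coordinate, so x and y := x^alpha agree at i while the antipode of y does
   not.  On a geodesic from x to the antipode of y there is therefore an edge
   uv of F_ab, and u still agrees with x wherever x and y differ.  As u is
   fixed, d(x,u) = d(y,u); but u is at least as close to x as to y in every
   coordinate, strictly in those where x and y differ, so x = y. *)

Section Balls.
Variables (T : finType) (e : rel T).

Lemma mem_ball_last x p : path e x p -> last x p \in ball e x (size p).
Proof.
elim/last_ind: p => [|p z IHp]; first by rewrite /= inE.
rewrite rcons_path last_rcons size_rcons => /andP[/IHp p_ball e_z] /=.
by rewrite !inE; apply/orP; right; apply/existsP; exists (last x p); rewrite p_ball.
Qed.

Lemma mem_ball_succ x z t k : z \in ball e x k -> e z t -> t \in ball e x k.+1.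
Proof. by move=> z_ball e_zt /=; rewrite !inE; apply/orP; right; apply/existsP; exists z; rewrite z_ball. Qed.

Lemma dist_automorphism alpha x y :
  automorphism e alpha -> dist e (alpha x) (alpha y) = dist e x y.
Proof.
move=> [[g alphaK gK] e_alpha].
suff ball_alpha k z : (alpha z \in ball e (alpha x) k) = (z \in ball e x k).
  by apply: eq_find => k; apply: ball_alpha.
elim: k z => [|k IHk] z /=; first by rewrite !in_set1 (can_eq alphaK).
rewrite !inE IHk; congr orb.
apply/existsP/existsP => -[w /andP[w_ball e_wz]].
  by exists (g w); rewrite -IHk gK w_ball -e_alpha gK.
by exists (alpha w); rewrite IHk w_ball e_alpha.
Qed.

Hypothesis conn : connected e.

Lemma exists_ball_lt_card x y : exists2 k, k < #|T| & y \in ball e x k.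
Proof.
have /connectP[p e_p ->] := conn x y.
have [q e_q uniq_q _] := shortenP e_p.
exists (size q); last exact: mem_ball_last.
by have := max_card (mem (x :: q)); rewrite (card_uniqP uniq_q).
Qed.

Lemma mem_ball_dist x y : y \in ball e x (dist e x y).
Proof.
have [k k_lt y_ball] := exists_ball_lt_card x y.
have has_k : has (fun k => y \in ball e x k) (iota 0 #|T|).
  by apply/hasP; exists k; rewrite ?mem_iota.
have := nth_find 0 has_k; rewrite nth_iota //.
by move: has_k; rewrite has_find size_iota.
Qed.

Lemma dist_le x y k : y \in ball e x k -> dist e x y <= k.
Proof.
move=> y_ball; rewrite leqNgt; apply/negP => k_lt.
have k_lt_card : k < #|T|.
  by apply: leq_trans k_lt _; rewrite -[X in _ <= X](size_iota 0) find_size.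
by have := before_find 0 k_lt; rewrite nth_iota // add0n y_ball.
Qed.

Lemma dist_eq0 x y : dist e x y = 0 -> y = x.
Proof. by move=> d0; have := mem_ball_dist x y; rewrite d0 /= inE => /eqP. Qed.

Lemma distxx x : dist e x x = 0.
Proof. by apply/eqP; rewrite -leqn0; apply: dist_le; rewrite /= inE. Qed.

Lemma dist_succ_pred x t m :
  dist e x t = m.+1 -> exists2 z, e z t & dist e x z = m.
Proof.
move=> dt; have := mem_ball_dist x t; rewrite dt /= inE => /orP[t_ball|].
  by have := dist_le t_ball; rewrite dt ltnn.
rewrite inE => /existsP[z /andP[z_ball e_zt]]; exists z => //.
apply/eqP; rewrite eqn_leq dist_le //= -ltnS -dt.
exact/dist_le/(mem_ball_succ (mem_ball_dist x z)).
Qed.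

Lemma dist_edge_eq1 s t : irreflexive e -> e s t -> dist e s t = 1.
Proof.
move=> irr e_st; apply/eqP; rewrite eqn_leq dist_le; last first.
  by apply: mem_ball_succ e_st; rewrite /= inE.
by rewrite lt0n; apply/eqP => /dist_eq0 ts; rewrite ts irr in e_st.
Qed.

End Balls.

Section Hamming.
Variable n : nat.
Implicit Types p q r s : {ffun 'I_n -> bool}.

Lemma hammingE p q : hamming p q = \sum_(j < n) (p j != q j).
Proof. by rewrite /hamming -sum1dep_card big_mkcond; apply: eq_bigr => j _; case: ifP. Qed.

Definition diff_only p q k := q k != p k /\ forall j, j != k -> q j = p j.

Lemma diff_only_sym p q k : diff_only p q k -> diff_only q p k.
Proof. by case=> pq_k pq_j; split=> [|j /pq_j ->]; rewrite // eq_sym. Qed.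

Lemma hamming_diff_only r p q k : diff_only p q k ->
  hamming r p + (r k != q k) = hamming r q + (r k != p k).
Proof.
move=> [_ pq_j]; rewrite !hammingE (bigD1 k) // [X in _ = X + _](bigD1 k) //=.
rewrite (@eq_bigr _ _ _ _ _ _ _ (fun j => nat_of_bool (r j != q j))) => [|j /pq_j ->] //.
by move: (\sum_(j | j != k) _) => S; lia.
Qed.

Lemma hamming_diff_only_neq r p q k : diff_only p q k -> hamming r p != hamming r q.
Proof.
move=> pq; have := hamming_diff_only r pq; case: pq => + _.
by case: (q k); case: (p k); case: (r k) => //= _; lia.
Qed.

Lemma hamming_diff_only_coord r s p q k : diff_only p q k ->
  hamming r p = hamming s p -> hamming r q = hamming s q -> r k = s k.
Proof.
move=> pq rs_p rs_q; have := hamming_diff_only r pq; have := hamming_diff_only s pq.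
rewrite -rs_p -rs_q; case: pq => + _.
by case: (q k); case: (p k); case: (r k); case: (s k) => //= _; lia.
Qed.

Lemma hamming_eq_agree p q r :
  hamming p r = hamming q r -> (forall j, p j != q j -> r j = p j) -> p = q.
Proof.
move=> pq_r r_agree.
have le_pq j : (p j != r j) <= (q j != r j).
  by case: (eqVneq (p j) (q j)) => [-> //|/r_agree ->]; rewrite eqxx.
have := leqif_sum (P := predT) (fun j _ => leqif_eq (le_pq j)).
rewrite -!hammingE pq_r => /leqif_refl/forallP eq_j.
apply/ffunP => j; apply/eqP/contraT => pq_j.
by have := eq_j j; rewrite /= (r_agree _ pq_j) eqxx; case: (p j) (q j) pq_j => [] [].
Qed.

End Hamming.

Section IsometricEmbedding.
Variables (T : finType) (e : rel T) (n : nat) (f : T -> {ffun 'I_n -> bool}).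
Hypothesis f_isometry : forall x y, dist e x y = hamming (f x) (f y).

Lemma in_F_diff_only a b u v i :
  diff_only (f a) (f b) i -> e u v -> diff_only (f u) (f v) i -> in_F e a b u v.
Proof.
move=> [ab_i ab_j] e_uv [uv_i uv_j].
rewrite /in_F e_uv /Theta !f_isometry !hammingE -!big_split /=.
rewrite (bigD1 i) // [X in _ != X](bigD1 i) //=.
rewrite (@eq_bigr _ _ _ _ _ _ _ (fun j => (f a j != f v j) + (f b j != f u j))).
  rewrite eqn_add2r; move: ab_i uv_i.
  by case: (f a i); case: (f b i); case: (f u i); case: (f v i).
by move=> j j_i; rewrite ab_j ?uv_j.
Qed.

Hypotheses (irr : irreflexive e) (conn : connected e).

Lemma edge_diff_only s t : e s t -> exists k, diff_only (f s) (f t) k.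
Proof.
move=> e_st; have := dist_edge_eq1 conn irr e_st; rewrite f_isometry /hamming.
move=> /eqP/cards1P[k st_k]; exists k; split => [|j j_k].
  by have := set11 k; rewrite -st_k inE eq_sym.
by have := j_k; rewrite -in_set1 -st_k inE negbK => /eqP.
Qed.

Lemma exists_edge_flipping p q j :
  f p j != f q j -> exists s t, e s t /\ f s j != f t j.
Proof.
have /connectP[r e_r ->] := conn p q.
elim: r p e_r => [|z r IHr] p /=; first by rewrite eqxx.
move=> /andP[e_pz e_r] pq_j.
have [pz_j|] := eqVneq (f p j) (f z j); last by exists p, z.
by apply: IHr e_r _; rewrite -pz_j.
Qed.

(* Induction on d(x, t): the last edge of a geodesic from x to t flips a
   coordinate in which t disagrees with x. *)
Lemma geodesic_flip_edge x t i : f t i != f x i ->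
  exists u v, [/\ e u v, diff_only (f u) (f v) i
                & forall j, f t j = f x j -> f u j = f x j].
Proof.
move: {2}(dist e x t) (erefl (dist e x t)) => m.
elim: m t => [|m IHm] t d_xt xt_i.
  by move: xt_i; rewrite (dist_eq0 conn d_xt) eqxx.
have [z e_zt d_xz] := dist_succ_pred conn d_xt.
have [k zt_k] := edge_diff_only e_zt.
have xz_k : f z k = f x k.
  have := hamming_diff_only (f x) zt_k; rewrite -!f_isometry d_xz d_xt.
  by have [|] := eqVneq (f x k) (f z k); case: (_ != _) => //=; lia.
have tz_agree j : f t j = f x j -> f z j = f x j.
  by have [->|j_k] := eqVneq j k; [rewrite xz_k | rewrite zt_k.2].
have [ik|ik] := eqVneq i k; first by exists z, t; rewrite ik.
have xz_i : f z i != f x i by rewrite -(zt_k.2 i ik).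
have [u [v [e_uv uv_i zu_agree]]] := IHm z d_xz xz_i.
by exists u, v; split => // j /tz_agree /zu_agree.
Qed.

Hypotheses (sym : symmetric e) (he : harmonic_even e).

Definition antipode z := odflt z [pick w | dist e z w == diam e].

Lemma dist_antipode z : dist e z (antipode z) = diam e.
Proof.
rewrite /antipode; case: pickP => [w /eqP //| no_antipode].
by have [w [d_zw _]] := he.1 z; have := no_antipode w; rewrite d_zw eqxx.
Qed.

Lemma dist_le_diam p q : dist e p q <= diam e.
Proof. exact: leq_trans (leq_bigmax q) (leq_bigmax p). Qed.

Lemma antipode_edge s t : e s t -> e (antipode s) (antipode t).
Proof. by move=> e_st; apply: he.2 e_st (dist_antipode s) (dist_antipode t). Qed.

Lemma dist_antipode_edge s t : e s t -> dist e s (antipode t) < diam e.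
Proof.
move=> e_st; have [k st_k] := edge_diff_only (antipode_edge e_st).
rewrite ltn_neqAle dist_le_diam andbT -(dist_antipode s) !f_isometry eq_sym.
exact: hamming_diff_only_neq st_k.
Qed.

(* With s' := antipode s agreeing with s at k, coordinatewise
   d(s, s') + d(t, t') <= d(s, t') + d(t, s'), which is < 2 diam. *)
Lemma antipode_flip_edge s t k :
  e s t -> diff_only (f s) (f t) k -> f (antipode s) k != f s k.
Proof.
move=> e_st [st_k st_j]; apply/negP => /eqP s_fixed_k.
have lt_st' := dist_antipode_edge e_st.
have lt_ts' : dist e t (antipode s) < diam e by apply: dist_antipode_edge; rewrite sym.
have : \sum_j ((f s j != f (antipode s) j) + (f t j != f (antipode t) j))
    <= \sum_j ((f s j != f (antipode t) j) + (f t j != f (antipode s) j)).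
  apply: leq_sum => j _; have [->|j_k] := eqVneq j k; last by rewrite st_j // addnC.
  by rewrite s_fixed_k eqxx; move: st_k; case: (f t k); case: (f s k); case: (f _ k).
by rewrite !big_split /= -!hammingE -!f_isometry !dist_antipode; lia.
Qed.

Lemma antipode_flip_edge_eq s t j : e s t ->
  (f (antipode s) j != f s j) = (f (antipode t) j != f t j).
Proof.
move=> e_st; have [k st_k] := edge_diff_only e_st.
have s_flip := antipode_flip_edge e_st st_k.
have t_flip : f (antipode t) k != f t k.
  by apply: antipode_flip_edge (diff_only_sym st_k); rewrite sym.
have [k' st'_k'] := edge_diff_only (antipode_edge e_st).
have k'k : k' = k.
  apply/eqP/contraT => k'_k; move: s_flip t_flip st_k.1.
  by rewrite (st'_k'.2 k); [case: (f _ k); case: (f s k); case: (f t k) | rewrite eq_sym].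
have [->|j_k] := eqVneq j k; first by rewrite s_flip t_flip.
by rewrite st_k.2 // st'_k'.2 // k'k.
Qed.

Lemma antipode_compl p q j : f p j != f q j -> forall z, f (antipode z) j = ~~ f z j.
Proof.
move=> pq_j z; have [s [t [e_st st_j]]] := exists_edge_flipping pq_j.
have [k st_k] := edge_diff_only e_st.
have kj : k = j by apply/eqP/contraT => k_j; rewrite st_k.2 1?eq_sym // eqxx in st_j.
have closed_flip : closed e [pred z | f (antipode z) j != f z j].
  by move=> y w e_yw; rewrite !inE; apply: antipode_flip_edge_eq.
have := closed_connect closed_flip (conn s z).
rewrite !inE /=; move: (antipode_flip_edge e_st st_k); rewrite kj => ->.
by case: (f _ j); case: (f z j).
Qed.

End IsometricEmbedding.

Theorem lemma3 (T : finType) (e : rel T) (a b : T) (alpha : T -> T) :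
  partial_cube e -> harmonic_even e -> e a b ->
  automorphism e alpha ->
  (forall v u : T, in_F e a b v u -> alpha v = v /\ alpha u = u) ->
  forall x : T, alpha x = x.
Proof.
move=> [[sym irr] [conn [n [f f_isometry]]]] he e_ab aut fixed_F x.
have dist_alpha z w : dist e (alpha z) (alpha w) = dist e z w.
  exact: dist_automorphism.
have [i ab_i] := edge_diff_only f_isometry irr conn e_ab.
have [a_fixed b_fixed] := fixed_F a b (in_F_diff_only f_isometry ab_i e_ab ab_i).
set y := alpha x.
have xy_i : f y i = f x i.
  apply: hamming_diff_only_coord ab_i _ _; rewrite -!f_isometry /y.
    by rewrite -{1}a_fixed dist_alpha.
  by rewrite -{1}b_fixed dist_alpha.
have antipode_complE := antipode_compl f_isometry irr conn sym he.
have xy'_i : f (antipode e y) i != f x i.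
  by rewrite (antipode_complE _ _ _ ab_i.1) xy_i; case: (f x i).
have [u [v [e_uv uv_i u_agree]]] := geodesic_flip_edge f_isometry irr conn xy'_i.
have [u_fixed _] := fixed_F u v (in_F_diff_only f_isometry ab_i e_uv uv_i).
have fxy : f x = f y.
  apply: (hamming_eq_agree (r := f u)) => [|j xy_j].
    by rewrite -!f_isometry /y -{2}u_fixed dist_alpha.
  by apply: u_agree; rewrite (antipode_complE _ _ _ xy_j); case: (f x j) (f y j) xy_j => [] [].
apply/esym/(dist_eq0 conn); apply/eqP.
by rewrite -(distxx e x) !f_isometry fxy.
Qed.
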